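(* If a $\mathsf{BST}^{\otimes}$-conjunction $\Phi$ is fulfilled by a finite accessible $\otimes$-graph, then $\Phi$ is satisfiable.
   Context: Sets range over the von Neumann universe of well-founded sets. For sets $s,t$, $s\otimes t=\{\{u,v\} : u\in s,\ v\in t\}$. A $\mathsf{BST}^{\otimes}$-conjunction is a finite conjunction of literals of the forms $x=y\cup z$, $x=y\setminus z$, $x=y\otimes z$, $x\neq y$; it is satisfiable if some set assignment $M$ on its variables makes all literals true when each variable $v$ is interpreted as $Mv$. A $\otimes$-graph $\mathcal G=(\mathcal P,\mathcal N,\mathcal T)$ consists of a set $\mathcal P$ of places, the set of nodes $\mathcal N=\mathcal P\otimes\mathcal P$ (the nonempty subsets of $\mathcal P$ with at most two elements), $\mathcal P\cap\mathcal N=\emptyset$, and a target map $\mathcal T:\mathcal N\to\mathcal P(\mathcal P)$. A source place is a place belonging to no $\mathcal T(A)$. The accessible places form the smallest set of places containing all source places and containing $\mathcal T(A)$ whenever all places of the node $A$ belong to it; $\mathcal G$ is accessible if every place is accessible. A map $\mathfrak F:\mathrm{Vars}(\Phi)\to\mathcal P(\mathcal P)$ is $\mathcal G$-fulfilling for $\Phi$ if: (a) $\mathfrak F(x)=\mathfrak F(y)\star\mathfrak F(z)$ for each conjunct $x=y\star z$, $\star\in\{\cup,\setminus\}$; (b) $\mathfrak F(x)\neq\mathfrak F(y)$ for each conjunct $x\neq y$; (c) for each conjunct $x=y\otimes z$: (c1) $\emptyset\neq\mathcal T(\{\upsilon,\zeta\})\subseteq\mathfrak F(x)$ for all $\upsilon\in\mathfrak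 F(y),\zeta\in\mathfrak F(z)$; (c2) $\mathfrak F(x)\subseteq\bigcup\{\mathcal T(A):A\in\mathfrak F(y)\otimes\mathfrak F(z)\}$; (c3) $\bigcup\{\mathcal T(A):A\in\mathcal N\setminus(\mathfrak F(y)\otimes\mathfrak F(z))\}\cap\mathfrak F(x)=\emptyset$. $\mathcal G$ fulfills $\Phi$ if such a map exists. *)

(* finite places via finType / {set _}; sets of the
   von Neumann universe modelled by Aczel's well-founded sets. *)
From Stdlib Require Lists.List.
From mathcomp Require Import all_boot.
Set Implicit Arguments. Unset Strict Implicit. Unset Printing Implicit Defensive.

Inductive WFSet : Type := mkset (A : Type) (f : A -> WFSet).

Definition idx (x : WFSet) : Type := let: mkset A _ := x in A.
Definition elt (x : WFSet) : idx x -> WFSet :=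
  match x as x0 return idx x0 -> WFSet with mkset _ f => f end.

Fixpoint seteq (x y : WFSet) : Prop :=
  match x, y with
  | mkset A f, mkset B g =>
      (forall a, exists b, seteq (f a) (g b)) /\
      (forall b, exists a, seteq (f a) (g b))
  end.

Definition setin (u x : WFSet) : Prop := exists a : idx x, seteq u (elt a).

Definition setU (s t : WFSet) : WFSet :=
  mkset (fun i : idx s + idx t =>
           match i with inl a => elt a | inr b => elt b end).

Definition setD (s t : WFSet) : WFSet :=
  mkset (fun a : {a : idx s | ~ setin (elt a) t} => elt (proj1_sig a)).

Definition setpair (u v : WFSet) : WFSet :=
  mkset (fun b : bool => if b then u else v).

Definition setotimes (s t : WFSet) : WFSet :=
  mkset (fun p : idx s * idx t => setpair (elt p.1) (elt p.2)).

Inductive literal : Type :=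
  | LUnion of nat & nat & nat
  | LDiff of nat & nat & nat
  | LOtimes of nat & nat & nat
  | LNeq of nat & nat.

Definition conjunction := seq literal.

Definition lit_holds (M : nat -> WFSet) (l : literal) : Prop :=
  match l with
  | LUnion x y z => seteq (M x) (setU (M y) (M z))
  | LDiff x y z => seteq (M x) (setD (M y) (M z))
  | LOtimes x y z => seteq (M x) (setotimes (M y) (M z))
  | LNeq x y => ~ seteq (M x) (M y)
  end.

Definition satisfiable (Phi : conjunction) : Prop :=
  exists M : nat -> WFSet, forall l, Stdlib.Lists.List.In l Phi -> lit_holds M l.

Section Graph.
Variable P : finType.

Definition potimes (S U : {set P}) : {set {set P}} :=
  [set [set u; v] | u in S, v in U].

Definition nodes : {set {set P}} := potimes setT setT.

Variable T : {set P} -> {set P}.   (* target map (only its values on nodes matter) *)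

Definition source_place (p : P) : Prop := forall A, A \in nodes -> p \notin T A.

Inductive accessible_place : P -> Prop :=
  | acc_src p : source_place p -> accessible_place p
  | acc_step A p : A \in nodes -> (forall q, q \in A -> accessible_place q) ->
                   p \in T A -> accessible_place p.

Definition accessible_graph : Prop := forall p, accessible_place p.

Definition lit_fulfilled (F : nat -> {set P}) (l : literal) : Prop :=
  match l with
  | LUnion x y z => F x = F y :|: F z
  | LDiff x y z => F x = F y :\: F z
  | LNeq x y => F x <> F y
  | LOtimes x y z =>
      [/\ (forall u v, u \in F y -> v \in F z ->
              T [set u; v] != set0 /\ T [set u; v] \subset F x),
          F x \subset \bigcup_(A in potimes (F y) (F z)) T A
        & [disjoint \bigcup_(A in nodes :\: potimes (F y) (F z)) T A & F x]]
  end.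

Definition fulfilling (Phi : conjunction) (F : nat -> {set P}) : Prop :=
  forall l, Stdlib.Lists.List.In l Phi -> lit_fulfilled F l.

Definition fulfills (Phi : conjunction) : Prop := exists F, fulfilling Phi F.
End Graph.

From Pilot Require Import Defs.
From mathcomp Require Import all_boot.
From mathcomp Require Import zify.
Set Implicit Arguments. Unset Strict Implicit. Unset Printing Implicit Defensive.

(* Given a finite accessible graph with target map T and a fulfilling map F,
   we build a set model out of "codes": finite binary trees whose leaves are
   pairwise distinct atoms (markers) and whose inner nodes are unordered pairs
   {c1, c2}.  Each code receives a label (p, n) — a place p and a counter n —
   computed bottom-up and invariant under extensional equality: a leaf is
   labelled by a source place, a pair {c1, c2} labelled (q1, n1), (q2, n2) by
   the place of T {q1, q2} selected by n1 + n2 modulo its size.  The counters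
   make every target reachable, so by induction on accessibility every place
   labels some code.  Variable x is interpreted as the set of codes whose
   place lies in F x.  Union and difference literals then hold pointwise, the
   conditions (c1)-(c3) turn a code of F x into a pair of codes of F y, F z
   and conversely, and disequalities hold because every place is realized. *)

Lemma seteq_refl x : seteq x x.
Proof. by elim: x => A f IH /=; split=> a; exists a. Qed.

Lemma seteq_sym x y : seteq x y -> seteq y x.
Proof.
elim: x y => A f IH [B g] /= [fg gf]; split.
- by move=> b; have [a /IH] := gf b; exists a.
- by move=> a; have [b /IH] := fg a; exists b.
Qed.

Lemma seteq_trans x y z : seteq x y -> seteq y z -> seteq x z.
Proof.
elim: x y z => A f IH [B g] [C h] /= [fg gf] [gh hg]; split.
- move=> a; have [b Hb] := fg a; have [c Hc] := gh b; exists c; exact: IH Hb Hc.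
- move=> c; have [b Hb] := hg c; have [a Ha] := gf b; exists a; exact: IH Ha Hb.
Qed.

Lemma seteq_mk A B (f : A -> WFSet) (g : B -> WFSet) : seteq (mkset f) (mkset g) <->
  (forall a, exists b, seteq (f a) (g b)) /\ (forall b, exists a, seteq (f a) (g b)).
Proof. by []. Qed.

Lemma setin_seteq u x y : setin u x -> seteq x y -> setin u y.
Proof.
case: x y => A f [B g] [a ua] /seteq_mk[fg _].
have [b fab] := fg a; exists b; exact: seteq_trans ua fab.
Qed.

Arguments seteq : simpl never.

Fixpoint numeral (n : nat) : WFSet :=
  match n with
  | 0 => mkset (fun v : Empty_set => match v with end)
  | k.+1 => mkset (fun _ : unit => numeral k)
  end.

Arguments numeral : simpl never.

Lemma numeral_inj a b : seteq (numeral a) (numeral b) -> a = b.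
Proof.
elim: a b => [|a IH] [|b] //=.
- by case=> _ /(_ tt) [[]].
- by case=> /(_ tt) [[]].
- by case=> /(_ tt) [_ /IH ->].
Qed.

Lemma numeral_seteq_same i j t :
  seteq (numeral i) t -> seteq (numeral j) t -> i = j.
Proof. by move=> it jt; apply: numeral_inj; exact: seteq_trans it (seteq_sym jt). Qed.

(* The m-th atom {0, 1, 2, m + 3}: atoms are pairwise distinct, and having
   three distinct elements, no atom is a pair. *)
Definition marker (m : nat) : WFSet :=
  mkset (fun o : option (option bool) => match o with
    | None => numeral 0
    | Some None => numeral 1
    | Some (Some true) => numeral 2
    | Some (Some false) => numeral m.+3 end).

Lemma marker_inj m m' : seteq (marker m) (marker m') -> m = m'.
Proof.
case/seteq_mk=> /(_ (Some (Some false))) [b Hb] _.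
by case: b Hb => [[[]|]|] /numeral_inj; lia.
Qed.

Lemma marker_not_pair m a b : ~ seteq (marker m) (setpair a b).
Proof.
case/seteq_mk=> to_pair _.
have [b0 H0] := to_pair None; have [b1 H1] := to_pair (Some None).
have [b2 H2] := to_pair (Some (Some true)).
case: b0 b1 b2 H0 H1 H2 => [] [] [] /= H0 H1 H2;
first [ have E := numeral_seteq_same H0 H1 | have E := numeral_seteq_same H0 H2
      | have E := numeral_seteq_same H1 H2 ]; discriminate E.
Qed.

Lemma setpair_swap a b : seteq (setpair a b) (setpair b a).
Proof. by apply/seteq_mk; split=> i; exists (~~ i); case: i => /=; exact: seteq_refl. Qed.

Lemma setpair_inv a b a' b' : seteq (setpair a b) (setpair a' b') ->
  (seteq a a' /\ seteq b b') \/ (seteq a b' /\ seteq b a').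
Proof.
case/seteq_mk=> to_right to_left.
have [[] Ha] := to_right true; have [[] Hb] := to_right false; rewrite /= in Ha Hb.
- right; split => //; have [[] Hx] := to_left false; rewrite /= in Hx => //.
  exact: seteq_trans (seteq_trans Ha (seteq_sym Hb)) Hx.
- by left.
- by right.
- left; split => //; have [[] Hx] := to_left true; rewrite /= in Hx => //.
  exact: seteq_trans (seteq_trans Ha (seteq_sym Hb)) Hx.
Qed.

Inductive code := Mark of nat | Pr of code & code.

Fixpoint interp (c : code) : WFSet :=
  match c with Mark m => marker m | Pr c1 c2 => setpair (interp c1) (interp c2) end.

Fixpoint fold_code A (leaf : nat -> A) (node : A -> A -> A) (c : code) : A :=
  match c with
  | Mark m => leaf m
  | Pr c1 c2 => node (fold_code leaf node c1) (fold_code leaf node c2)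
  end.

(* A fold whose node operation is commutative only depends on the set a code
   denotes, since pairs are unordered and atoms are distinct from pairs. *)
Lemma fold_code_seteq A (leaf : nat -> A) (node : A -> A -> A) :
  commutative node -> forall c c', seteq (interp c) (interp c') ->
  fold_code leaf node c = fold_code leaf node c'.
Proof.
move=> nodeC; elim=> [m|c1 IH1 c2 IH2] [m'|c1' c2'] /=.
- by move/marker_inj ->.
- by move/marker_not_pair.
- by move/seteq_sym/marker_not_pair.
- by case/setpair_inv => -[/IH1 -> /IH2 ->].
Qed.

Definition codeset (sel : pred code) : WFSet :=
  mkset (fun s : {c : code | sel c} => interp (sval s)).

Definition seteq_invariant (sel : pred code) : Prop :=
  forall c c', seteq (interp c) (interp c') -> sel c = sel c'.

Section Codesets.
Implicit Types a b sel : pred code.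

Lemma setin_codeset sel c : seteq_invariant sel ->
  setin (interp c) (codeset sel) <-> sel c.
Proof.
move=> inv; split; last by move=> Hc; exists (exist _ c Hc); exact: seteq_refl.
by case=> -[c' Hc'] /= /inv ->.
Qed.

Lemma codeset_ext a b : a =1 b -> seteq (codeset a) (codeset b).
Proof.
move=> ab; apply/seteq_mk; split=> -[c Hc].
- have Hb : b c by rewrite -ab.
  by exists (exist _ c Hb); exact: seteq_refl.
- have Ha : a c by rewrite ab.
  by exists (exist _ c Ha); exact: seteq_refl.
Qed.

Lemma codesetU a b :
  seteq (codeset (fun c => a c || b c)) (Defs.setU (codeset a) (codeset b)).
Proof.
apply/seteq_mk; split.
- case=> c /= Hc; case Ha: (a c).
  + by exists (inl (exist _ c Ha)); exact: seteq_refl.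
  + have Hb : b c by rewrite Ha in Hc.
    by exists (inr (exist _ c Hb)); exact: seteq_refl.
- case=> -[c Hc].
  + have Hab : a c || b c by rewrite Hc.
    by exists (exist _ c Hab); exact: seteq_refl.
  + have Hab : a c || b c by rewrite Hc orbT.
    by exists (exist _ c Hab); exact: seteq_refl.
Qed.

Lemma codesetD a b : seteq_invariant b ->
  seteq (codeset (fun c => a c && ~~ b c)) (Defs.setD (codeset a) (codeset b)).
Proof.
move=> invb; apply/seteq_mk; split.
- case=> c /= /andP[Ha Hb].
  have notin : ~ setin (elt (exist _ c Ha : idx (codeset a))) (codeset b).
    by move/setin_codeset=> /(_ invb); apply/negP.
  by exists (exist _ (exist _ c Ha) notin); exact: seteq_refl.
- case=> [[c Ha] notin] /=.
  have Hab : a c && ~~ b c.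
    by rewrite Ha; apply/negP => Hb; apply: notin; apply/setin_codeset.
  by exists (exist _ c Hab); exact: seteq_refl.
Qed.

Lemma codeset_neq a b c : seteq_invariant a -> seteq_invariant b ->
  a c != b c -> ~ seteq (codeset a) (codeset b).
Proof.
wlog [Ha Hb] : a b / a c /\ ~~ b c => [hyp inva invb ab|inva invb _ eqab].
  case Ha: (a c) in ab.
    have nb : ~~ b c by move: ab; case: (b c).
    by apply: hyp; rewrite ?Ha ?(negbTE nb).
  have Hb : b c by move: ab; case: (b c).
  by move/seteq_sym; apply: (hyp b a) => //; rewrite Hb Ha.
have : setin (interp c) (codeset b) by apply: setin_seteq eqab; exact/setin_codeset.
by move/setin_codeset=> /(_ invb); apply/negP.
Qed.

Lemma codeset_otimes sel a b :
  (forall c, sel c -> exists c1 c2,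
     [/\ a c1, b c2 & seteq (interp c) (interp (Pr c1 c2))]) ->
  (forall c1 c2, a c1 -> b c2 -> sel (Pr c1 c2)) ->
  seteq (codeset sel) (setotimes (codeset a) (codeset b)).
Proof.
move=> split_sel pair_sel; apply/seteq_mk; split.
- case=> c /= /split_sel [c1 [c2 [Ha Hb Hc]]].
  by exists (exist _ c1 Ha, exist _ c2 Hb).
- case=> -[c1 Ha] [c2 Hb] /=.
  by exists (exist _ (Pr c1 c2) (pair_sel _ _ Ha Hb)); exact: seteq_refl.
Qed.

End Codesets.

Section Labelling.
Variables (P : finType) (T : {set P} -> {set P}).

Definition is_source (p : P) : bool := [forall A in nodes P, p \notin T A].

Lemma is_sourceP p : reflect (source_place T p) (is_source p).
Proof.
apply: (iffP forall_inP) => [H A /H //|H A]; exact: H.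
Qed.

Definition leaf_label (m : nat) : option (P * nat) :=
  if [pick p | (enum_rank p == m %% #|P| :> nat) && is_source p] is Some p
  then Some (p, m %/ #|P|) else None.

Definition node_label (o1 o2 : option (P * nat)) : option (P * nat) :=
  match o1, o2 with
  | Some (q1, n1), Some (q2, n2) =>
      let S := T [set q1; q2] in
      if #|S| == 0 then None
      else Some (nth q1 (enum S) ((n1 + n2) %% #|S|), (n1 + n2) %/ #|S|)
  | _, _ => None
  end.

Definition label : code -> option (P * nat) := fold_code leaf_label node_label.

Lemma label_Pr_node c1 c2 : label (Pr c1 c2) = node_label (label c1) (label c2).
Proof. by []. Qed.

Lemma node_labelC : commutative node_label.
Proof.
case=> [[q1 n1]|] [[q2 n2]|] //=; rewrite setUC addnC; case: ifP => // S0.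
congr (Some (_, _)); apply: set_nth_default.
by rewrite -cardE ltn_pmod // lt0n S0.
Qed.

Lemma label_seteq c c' : seteq (interp c) (interp c') -> label c = label c'.
Proof. exact: (fold_code_seteq leaf_label node_labelC). Qed.

Lemma leaf_label_source m p n : leaf_label m = Some (p, n) -> is_source p.
Proof. by rewrite /leaf_label; case: pickP => // q /andP[_ ?] [<- _]. Qed.

Lemma leaf_label_hit p n : is_source p ->
  leaf_label (n * #|P| + enum_rank p) = Some (p, n).
Proof.
move=> src; have P0 : 0 < #|P| by apply/card_gt0P; exists p.
rewrite /leaf_label modnMDl modn_small ?ltn_ord // divnMDl // divn_small ?ltn_ord //.
case: pickP => [q /andP[/eqP/val_inj/enum_rank_inj -> _]|/(_ p)]; first by rewrite addn0.
by rewrite eqxx src.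
Qed.

Lemma label_Pr c1 c2 p n : label (Pr c1 c2) = Some (p, n) ->
  exists q1 n1 q2 n2, [/\ label c1 = Some (q1, n1), label c2 = Some (q2, n2)
                        & p \in T [set q1; q2]].
Proof.
rewrite label_Pr_node; case: (label c1) => [[q1 n1]|] //; case: (label c2) => [[q2 n2]|] //=.
case: ifP => // S0 [<- _]; exists q1, n1, q2, n2; split=> //.
by rewrite -mem_enum mem_nth // -cardE ltn_pmod // lt0n S0.
Qed.

Lemma label_Pr_defined c1 c2 q1 n1 q2 n2 :
  label c1 = Some (q1, n1) -> label c2 = Some (q2, n2) -> T [set q1; q2] != set0 ->
  exists p n, label (Pr c1 c2) = Some (p, n).
Proof.
rewrite label_Pr_node => -> -> /=; rewrite -cards_eq0 => /negbTE ->.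
by do 2 eexists.
Qed.

Lemma node_label_hit q1 n1 q2 n2 p n : p \in T [set q1; q2] ->
  n1 + n2 = n * #|T [set q1; q2]| + index p (enum (T [set q1; q2])) ->
  node_label (Some (q1, n1)) (Some (q2, n2)) = Some (p, n).
Proof.
move=> pS sum; set S := T _ in pS sum *.
have S0 : 0 < #|S| by apply/card_gt0P; exists p.
have jS : index p (enum S) < #|S| by rewrite cardE index_mem mem_enum.
rewrite /= -/S (negbTE (lt0n_neq0 S0)) sum modnMDl modn_small // divnMDl // divn_small //.
by rewrite addn0 nth_index ?mem_enum.
Qed.

Definition reached (p : P) (N : nat) : Prop :=
  forall n, N <= n -> exists c, label c = Some (p, n).

Lemma accessible_reached p : accessible_place T p -> exists N, reached p N.
Proof.
elim=> [q /is_sourceP src | A q /imset2P[u v _ _ ->] _ IH qA].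
  by exists 0 => n _; exists (Mark (n * #|P| + enum_rank q)); exact: leaf_label_hit.
have [Nu reach_u] := IH u (set21 u v); have [Nv reach_v] := IH v (set22 u v).
set k := #|T [set u; v]|; set j := index q (enum (T [set u; v])).
have k0 : 0 < k by apply/card_gt0P; exists q.
exists (Nu + Nv) => n Hn; have nk : n <= n * k by rewrite leq_pmulr.
have [c1 Hc1] := reach_u Nu (leqnn _).
have Nv_small : Nv <= n * k + j - Nu by lia.
have [c2 Hc2] := reach_v _ Nv_small.
exists (Pr c1 c2); rewrite label_Pr_node Hc1 Hc2; apply: node_label_hit => //; lia.
Qed.

Lemma accessible_labelled p : accessible_place T p -> exists c n, label c = Some (p, n).
Proof.
case/accessible_reached=> N reach; have [c Hc] := reach N (leqnn N).
by exists c, N.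
Qed.

End Labelling.

Section Model.
Variables (P : finType) (T : {set P} -> {set P}) (F : nat -> {set P}).

Definition in_var (x : nat) (c : code) : bool :=
  if label T c is Some (p, _) then p \in F x else false.

Definition model (x : nat) : WFSet := codeset (in_var x).

Lemma in_var_invariant x : seteq_invariant (in_var x).
Proof. by move=> c c' /(label_seteq T) E; rewrite /in_var E. Qed.

Lemma in_var_combine x y z (f : bool -> bool -> bool) : f false false = false ->
  (forall p, (p \in F x) = f (p \in F y) (p \in F z)) ->
  in_var x =1 (fun c => f (in_var y c) (in_var z c)).
Proof. by move=> f0 Fx c; rewrite /in_var; case: (label T c) => [[p _]|]. Qed.

Lemma union_model x y z :
  F x = F y :|: F z -> seteq (model x) (Defs.setU (model y) (model z)).
Proof.
move=> Fx; apply: seteq_trans (codesetU _ _); apply: codeset_ext.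
by apply: (in_var_combine (f := orb)) => // p; rewrite Fx in_setU.
Qed.

Lemma diff_model x y z :
  F x = F y :\: F z -> seteq (model x) (Defs.setD (model y) (model z)).
Proof.
move=> Fx; apply: seteq_trans (codesetD _ (in_var_invariant z)); apply: codeset_ext.
by apply: (in_var_combine (f := fun a b => a && ~~ b)) => // p; rewrite Fx in_setD andbC.
Qed.

Lemma node_in_potimes x y z u v p :
  [disjoint \bigcup_(A in nodes P :\: potimes (F y) (F z)) T A & F x] ->
  p \in F x -> p \in T [set u; v] ->
  (u \in F y /\ v \in F z) \/ (u \in F z /\ v \in F y).
Proof.
move=> disj px puv.
have : [set u; v] \in potimes (F y) (F z).
  apply/negPn/negP => notpot; move: (disjointFl disj px) => /negbT/negP; apply.
  apply/bigcupP; exists [set u; v] => //.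
  by rewrite in_setD notpot; apply/imset2P; exists u v; rewrite ?inE.
case/imset2P=> u' v' u'y v'z E.
have : u \in [set u'; v'] by rewrite -E set21.
have : v \in [set u'; v'] by rewrite -E set22.
have : u' \in [set u; v] by rewrite E set21.
have : v' \in [set u; v] by rewrite E set22.
rewrite !inE => /orP[/eqP ?|/eqP ?] /orP[/eqP ?|/eqP ?] /orP[/eqP ?|/eqP ?]
  /orP[/eqP ?|/eqP ?]; subst; auto.
Qed.

Lemma otimes_model x y z : lit_fulfilled T F (LOtimes x y z) ->
  seteq (model x) (setotimes (model y) (model z)).
Proof.
case=> targets_in covered disj; apply: codeset_otimes.
- case=> [m|c1 c2]; rewrite /in_var.
    case Hm: (label T (Mark m)) => [[p n]|] // px.
    case/bigcupP: (subsetP covered p px) => A /imset2P[u v _ _ ->] pA.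
    have /is_sourceP src := leaf_label_source Hm.
    by have := src [set u; v] (imset2_f _ (in_setT u) (in_setT v)); rewrite pA.
  case Hc: (label T (Pr c1 c2)) => [[p n]|] // px.
  have [q1 [n1 [q2 [n2 [H1 H2 pq]]]]] := label_Pr Hc.
  have [[q1y q2z]|[q1z q2y]] := node_in_potimes disj px pq.
  + by exists c1, c2; rewrite /in_var H1 H2; split=> //; exact: seteq_refl.
  + by exists c2, c1; rewrite /in_var H1 H2; split=> //; exact: setpair_swap.
- move=> c1 c2; rewrite /in_var.
  case H1: (label T c1) => [[u n1]|] //; case H2: (label T c2) => [[v n2]|] // uy vz.
  have [nonempty sub] := targets_in u v uy vz.
  have [p [n Hc]] := label_Pr_defined H1 H2 nonempty.
  have [q1 [m1 [q2 [m2 [E1 E2 pq]]]]] := label_Pr Hc.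
  move: E1 E2 pq; rewrite H1 H2 => -[<- _] [<- _] pq.
  by rewrite Hc (subsetP sub).
Qed.

(* Distinct F-values differ at a place, which some code realizes. *)
Lemma neq_model x y : accessible_graph T -> F x <> F y -> ~ seteq (model x) (model y).
Proof.
move=> acc Fxy.
have [p pxy] : exists p, (p \in F x) != (p \in F y).
  case: (pickP (fun p => (p \in F x) != (p \in F y))) => [p ?|same]; first by exists p.
  by case: Fxy; apply/setP => p; apply/eqP; move: (same p) => /= /negbFE.
have [c [n Hc]] := accessible_labelled (acc p).
apply: (codeset_neq (c := c) (in_var_invariant x) (in_var_invariant y)).
by rewrite /in_var Hc.
Qed.

End Model.

Theorem mainTheorem7 (Phi : conjunction) (P : finType) (T : {set P} -> {set P}) :
  accessible_graph T -> fulfills T Phi -> satisfiable Phi.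
Proof.
move=> acc [F fulfilling]; exists (model T F) => l /fulfilling.
case: l => [x y z|x y z|x y z|x y] /=.
- exact: union_model.
- exact: diff_model.
- exact: otimes_model.
- exact: neq_model.
Qed.
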